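(* Let $\succcurlyeq$ be a preference relation on the set $\mathcal{B}$ of bets over a propositional language $\mathcal{L}$ satisfying Non-Triviality, Objective Expected Utility and Inclusion/Exclusion. Let $\mathcal{T}$ be a theory and let $\mathcal{S}\subseteq\mathcal{T}$ be the unique largest sub-theory such that $\succcurlyeq$ satisfies $\mathcal{S}$-Implication (i.e. $\succcurlyeq$ satisfies $\mathcal{S}$-Implication and fails $\mathcal{S}'$-Implication for every $\mathcal{S}\subsetneq\mathcal{S}'\subseteq\mathcal{T}$). Then $\mathcal{S}=\{\phi\in\mathcal{T}\mid b_\phi\succcurlyeq b_{\mathbf{T}}\}$.
   Context: Let $\mathbb{P}$ be a set of propositional variables containing distinguished $\mathbf{T}$, $\mathbf{F}$, and $\mathcal{L}$ the language generated by $\neg,\land,\lor$; $\phi\implies\psi$ means $\psi$ is deducible from $\phi$ in classical propositional logic. A theory is a set $\mathcal{T}\subseteq\mathcal{L}$ closed under logical implication with $\mathbf{F}\notin\mathcal{T}$. For a set $\mathcal{S}$ of statements, $\phi\overset{\mathcal{S}}{\implies}\psi$ means $\psi$ is deducible from $\phi$ together with the elements of $\mathcal{S}$. A bet is a finitely supported $b:\mathcal{L}\to[0,1]$ summing to $1$; $b_\phi$ is the point-mass bet on $\phi$; the set $\mathcal{B}$ of bets is a mixture space under pointwise mixtures, and $\{\alpha_1 b_{\phi_1},\dots,\alpha_k b_{\phi_k}\}$ denotes the bet assigning weight $\alpha_i$ to $\phi_i$ (weights on coinciding statements added). Non-Triviality: $b_{\mathbf{T}}\succcurlyeq b_\phi\succcurlyeq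 b_{\mathbf{F}}$ for all $\phi$ and $b_{\mathbf{T}}\succ b_{\mathbf{F}}$. Objective Expected Utility: $\succcurlyeq$ is complete, transitive, Archimedean and satisfies Independence. $\mathcal{S}$-Implication: $\phi\overset{\mathcal{S}}{\implies}\psi$ implies $b_\psi\succcurlyeq b_\phi$. Inclusion/Exclusion: for any $\phi_1,\dots,\phi_n\in\mathcal{L}$ and $\psi$ with $\phi_i\implies\psi$ for all $i$, letting $E$ and $O$ be the collections of nonempty subsets of $\{1,\dots,n\}$ of even and odd cardinality respectively, $\phi_I=\bigwedge_{i\in I}\phi_i$, and $m=\max\{|E|+1,|O|\}$, we have $\{\tfrac1m b_\psi,\ \tfrac1m b_{\phi_I}\ (I\in E),\ (1-\tfrac{|E|+1}{m})b_{\mathbf{F}}\}\succcurlyeq\{\tfrac1m b_{\phi_I}\ (I\in O),\ (1-\tfrac{|O|}{m})b_{\mathbf{F}}\}$. *)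

From mathcomp Require Import all_boot.
From Stdlib Require Import Reals ClassicalDescription.

Set Implicit Arguments.
Unset Strict Implicit.
Unset Printing Implicit Defensive.

Section Logic.
Variable P : Type.
Variables (vT vF : P).

Inductive form : Type :=
| Var of P
| Neg of form
| And of form & form
| Or of form & form.

Fixpoint eval (v : P -> bool) (f : form) : bool :=
  match f with
  | Var p => v p
  | Neg g => ~~ eval v g
  | And g h => eval v g && eval v h
  | Or g h => eval v g || eval v h
  end.

(* Classical valuations, with T read as true and F as false. *)
Definition admissible (v : P -> bool) : Prop := v vT = true /\ v vF = false.

(* Classical (finite-premise) consequence; by soundness/completeness this is
   deducibility in classical propositional logic. *)
Definition entails (G : list form) (psi : form) : Prop :=
  forall v, admissible v -> (forall g, List.In g G -> eval v g) -> eval v psi.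

Definition implies (phi psi : form) : Prop := entails (phi :: nil) psi.

(* phi ==>^S psi : psi deducible from phi together with elements of S
   (deductions use finitely many premises). *)
Definition S_implies (S : form -> Prop) (phi psi : form) : Prop :=
  exists G : list form, (forall g, List.In g G -> S g) /\ entails (phi :: G) psi.

Definition theory (Th : form -> Prop) : Prop :=
  (forall (G : list form) psi, (forall g, List.In g G -> Th g) -> entails G psi -> Th psi)
  /\ ~ Th (Var vF).

Definition bet := form -> R.

Definition list_sum (b : bet) (l : list form) : R :=
  List.fold_right (fun f acc => (b f + acc)%R) 0%R l.

Definition is_bet (b : bet) : Prop :=
  (forall f, (0 <= b f <= 1)%R) /\
  exists l : list form, List.NoDup l /\ (forall f, ~ List.In f l -> b f = 0%R)
                        /\ list_sum b l = 1%R.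

Definition pm (phi : form) : bet :=
  fun chi => if excluded_middle_informative (chi = phi) then 1%R else 0%R.

Definition mix (a : R) (p q : bet) : bet := fun chi => (a * p chi + (1 - a) * q chi)%R.

Definition strict (pref : bet -> bet -> Prop) (p q : bet) : Prop := pref p q /\ ~ pref q p.

Definition non_triviality (pref : bet -> bet -> Prop) : Prop :=
  (forall phi, pref (pm (Var vT)) (pm phi) /\ pref (pm phi) (pm (Var vF)))
  /\ strict pref (pm (Var vT)) (pm (Var vF)).

Definition objective_EU (pref : bet -> bet -> Prop) : Prop :=
  (forall p q, is_bet p -> is_bet q -> pref p q \/ pref q p) /\
  (forall p q r, is_bet p -> is_bet q -> is_bet r -> pref p q -> pref q r -> pref p r) /\
  (forall p q r, is_bet p -> is_bet q -> is_bet r ->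
     strict pref p q -> strict pref q r ->
     exists a b : R, (0 < a < 1)%R /\ (0 < b < 1)%R /\
       strict pref (mix a p r) q /\ strict pref q (mix b p r)) /\
  (forall p q r (a : R), is_bet p -> is_bet q -> is_bet r -> (0 < a <= 1)%R ->
     (pref p q <-> pref (mix a p r) (mix a q r))).

Definition satisfies_S_implication (pref : bet -> bet -> Prop) (S : form -> Prop) : Prop :=
  forall phi psi, S_implies S phi psi -> pref (pm psi) (pm phi).

Fixpoint conj_list (x : form) (l : list form) : form :=
  match l with
  | nil => x
  | cons y r => And x (conj_list y r)
  end.

(* phi_I = /\_{i in I} phi_i, conjuncts in increasing index order
   (only used for nonempty I; the value on the empty set is irrelevant) *)
Definition conjI (n : nat) (phi : 'I_n -> form) (I : {set 'I_n}) : form :=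
  match enum I with
  | nil => Var vT
  | cons i r => conj_list (phi i) (map phi r)
  end.

Definition evenI (n : nat) : {set {set 'I_n}} :=
  [set I : {set 'I_n} | (I != set0) && ~~ odd #|I|].
Definition oddI (n : nat) : {set {set 'I_n}} :=
  [set I : {set 'I_n} | odd #|I|].

Definition inclusion_exclusion (pref : bet -> bet -> Prop) : Prop :=
  forall (n : nat) (phi : 'I_n -> form) (psi : form),
    (forall i, implies (phi i) psi) ->
    let E := evenI n in
    let O := oddI n in
    let m := maxn (#|E| + 1) #|O| in
    pref
      (fun chi => (/ INR m * pm psi chi
                   + \big[Rplus/0%R]_(I in E) (/ INR m * pm (conjI phi I) chi)
                   + (1 - INR (#|E| + 1) / INR m) * pm (Var vF) chi)%R)
      (fun chi => (\big[Rplus/0%R]_(I in O) (/ INR m * pm (conjI phi I) chi)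
                   + (1 - INR #|O| / INR m) * pm (Var vF) chi)%R).

End Logic.

(* A sentence of S is a premise of the deduction T ==>^S phi, hence b_phi >= b_T.
   Conversely, let phi in Th \ S with b_phi >= b_T.  Every deduction
   chi ==> psi from S and phi is a deduction chi /\ phi ==> psi from S, so
   b_psi >= b_(chi /\ phi) >= b_chi: the second step combines Inclusion/Exclusion
   for n = 2, (b_(chi \/ phi) + b_(chi /\ phi))/2 >= (b_chi + b_phi)/2, with
   b_phi >= b_T >= b_(chi \/ phi), and cancels the common half by Independence.
   So the theory generated by S and phi, which lies in Th and strictly contains
   S, satisfies Implication, contradicting the maximality of S. *)

From Pilot Require Import Defs.
From mathcomp Require Import all_boot.
From HB Require Import structures.
From Stdlib Require Import Reals Lra Classical FunctionalExtensionality ClassicalDescription.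

Set Implicit Arguments.
Unset Strict Implicit.
Unset Printing Implicit Defensive.

HB.instance Definition _ := Monoid.isComLaw.Build R 0%R Rplus
  (fun x y z => esym (Rplus_assoc x y z)) Rplus_comm Rplus_0_l.

Lemma evenI2 : evenI 2 = [set setT].
Proof.
apply/setP => I; rewrite !inE -cards_eq0 eqEcard subsetT cardsT card_ord /=.
by have := max_card (mem I); rewrite card_ord; case: #|I| => [|[|[|k]]].
Qed.

Lemma oddI2 : oddI 2 = [set [set ord0]; [set ord_max]].
Proof.
apply/setP => I; rewrite !inE; apply/idP/idP; last first.
  by case/orP => /eqP ->; rewrite cards1.
have := max_card (mem I); rewrite card_ord.
case cardI: #|I| => [|[|[|k]]] // _ _.
move/eqP: cardI => /cards1P [[[|[|k]] lt_k2] ->] //.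
  by rewrite (_ : Ordinal lt_k2 = ord0) ?eqxx //; apply/val_inj.
by rewrite (_ : Ordinal lt_k2 = ord_max) ?eqxx ?orbT //; apply/val_inj.
Qed.

Lemma set1_ord0_neq_ord_max : [set ord0] != [set ord_max] :> {set 'I_2}.
Proof. by apply/eqP => /setP/(_ ord0); rewrite !inE. Qed.

Section Bets.
Variable P : Type.
Implicit Types (f g : form P) (p q : bet P).

Lemma pm_id f : pm f f = 1%R.
Proof. by rewrite /pm; case: excluded_middle_informative. Qed.

Lemma pm_neq f g : g <> f -> pm f g = 0%R.
Proof. by rewrite /pm; case: excluded_middle_informative. Qed.

Lemma pm_01 f g : pm f g = 1%R \/ pm f g = 0%R.
Proof. by rewrite /pm; case: excluded_middle_informative; [left|right]. Qed.

Lemma is_bet_pm f : is_bet (pm f).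
Proof.
split=> [g|]; first by case: (pm_01 f g) => ->; lra.
exists [:: f]; split; first by constructor; [case | constructor].
split=> [g g_notin|]; last by rewrite /= pm_id; lra.
by apply: pm_neq => g_f; apply: g_notin; left.
Qed.

Lemma is_bet_mix_pm a f g : (0 <= a <= 1)%R -> is_bet (mix a (pm f) (pm g)).
Proof.
move=> a01; split=> [h|].
  by rewrite /mix; case: (pm_01 f h) => ->; case: (pm_01 g h) => ->; nra.
case: (excluded_middle_informative (f = g)) => [<- | neq_fg].
  exists [:: f]; split; first by constructor; [case | constructor].
  split=> [h h_notin|]; last by rewrite /= /mix pm_id; lra.
  by rewrite /mix pm_neq => [|h_f]; [lra | apply: h_notin; left].
exists [:: f; g]; split.
  constructor; last by constructor; [case | constructor].
  by case=> // /esym.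
split=> [h h_notin|]; last first.
  rewrite /= /mix !pm_id (pm_neq (f := f) (g := g)) ?(pm_neq (f := g) (g := f)) //.
  - lra.
  - by move/esym.
rewrite /mix !pm_neq => [|h_g|h_f]; first lra.
  by apply: h_notin; right; left.
by apply: h_notin; left.
Qed.

Lemma mix_half_comm p q : mix (/2) p q = mix (/2) q p.
Proof. by apply: functional_extensionality => h; rewrite /mix; lra. Qed.

End Bets.

Section Deduction.
Variables (P : Type) (vT vF : P).
Implicit Types (f g phi chi psi : form P) (G H : list (form P)) (S Th : form P -> Prop).

Lemma entails_weaken G H psi :
  List.incl G H -> entails vT vF G psi -> entails vT vF H psi.
Proof. by move=> GH G_psi v adm_v H_v; apply: G_psi => // g /GH; apply: H_v. Qed.

Lemma entails_cons_weaken phi G H psi :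
  List.incl G H -> entails vT vF (phi :: G) psi -> entails vT vF (phi :: H) psi.
Proof. by move=> GH; apply: entails_weaken => g [<- | /GH]; [left | right]. Qed.

Lemma entails_trans G H psi :
  (forall h, List.In h H -> entails vT vF G h) -> entails vT vF H psi ->
  entails vT vF G psi.
Proof. by move=> G_H H_psi v adm_v G_v; apply: H_psi => // h /G_H; apply. Qed.

Lemma S_implies_common_premises S phi H :
  (forall h, List.In h H -> S_implies vT vF S phi h) ->
  exists G, (forall g, List.In g G -> S g) /\
            forall h, List.In h H -> entails vT vF (phi :: G) h.
Proof.
elim: H => [|h H IH] H_S; first by exists [::]; split=> ? [].
have [G1 [G1_S G1_h]] := H_S h (or_introl erefl).
have [G2 [G2_S G2_H]] := IH (fun k k_H => H_S k (or_intror k_H)).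
exists (G1 ++ G2); split=> [g g_G | k [<- | /G2_H]].
- by case: (List.in_app_or _ _ _ g_G); auto.
- by apply: entails_cons_weaken G1_h; apply/List.incl_appl/List.incl_refl.
- by apply: entails_cons_weaken; apply/List.incl_appr/List.incl_refl.
Qed.

Lemma S_implies_premise S phi f : S f -> S_implies vT vF S phi f.
Proof. by move=> S_f; exists [:: f]; split=> [g [<- | []] | v _ ->] //; right; left. Qed.

Lemma S_implies_self S phi : S_implies vT vF S phi phi.
Proof. by exists [::]; split=> [g [] | v _ ->] //; left. Qed.

Lemma S_implies_closed S phi G psi :
  (forall g, List.In g G -> S_implies vT vF S phi g) -> entails vT vF G psi ->
  S_implies vT vF S phi psi.
Proof.
move=> /S_implies_common_premises [H [H_S H_G]] G_psi.
by exists H; split=> //; apply: entails_trans G_psi.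
Qed.

Lemma S_implies_sub_theory Th S phi psi :
  theory vT vF Th -> (forall f, S f -> Th f) -> Th phi ->
  S_implies vT vF S phi psi -> Th psi.
Proof.
move=> [Th_closed _] S_Th Th_phi [G [G_S G_psi]].
by apply: Th_closed G_psi => g [<- | /G_S]; auto.
Qed.

Lemma theory_S_implies Th S phi :
  theory vT vF Th -> (forall f, S f -> Th f) -> Th phi ->
  theory vT vF (S_implies vT vF S phi).
Proof.
move=> Th_theory S_Th Th_phi; split; first exact: S_implies_closed.
by move=> /(S_implies_sub_theory Th_theory S_Th Th_phi); apply: (proj2 Th_theory).
Qed.

Lemma S_implies_extend S phi chi psi :
  S_implies vT vF (S_implies vT vF S phi) chi psi ->
  S_implies vT vF S (And chi phi) psi.
Proof.
move=> [G [/S_implies_common_premises [H [H_S H_G]] chi_G_psi]].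
exists H; split=> // v adm_v H_v.
have /andP [v_chi v_phi] := H_v _ (or_introl erefl).
apply: chi_G_psi => // g [<- // | /H_G g_H]; apply: g_H => // h [<- // | h_H].
by apply: H_v; right.
Qed.

End Deduction.

Section Preferences.
Variables (P : Type) (vT vF : P) (pref : bet P -> bet P -> Prop).
Implicit Types (f chi phi psi : form P).

Lemma conjI_set1 n (phi : 'I_n -> form P) i : conjI vT phi [set i] = phi i.
Proof. by rewrite /conjI enum_set1. Qed.

Lemma conjI_setT2 (phi : 'I_2 -> form P) :
  conjI vT phi setT = And (phi ord0) (phi ord_max).
Proof.
rewrite /conjI (_ : enum _ = [:: ord0; ord_max]) //.
by apply: (@inj_map _ _ val val_inj); rewrite enum_setT -enumT val_enum_ord.
Qed.

(* Plain [implies] would denote ssrbool's implication. *)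
Lemma inclusion_exclusion2 phi1 phi2 psi :
  inclusion_exclusion vT vF pref ->
  Defs.implies vT vF phi1 psi -> Defs.implies vT vF phi2 psi ->
  pref (mix (/2) (pm psi) (pm (And phi1 phi2))) (mix (/2) (pm phi1) (pm phi2)).
Proof.
move=> IE phi1_psi phi2_psi.
pose phi (i : 'I_2) := if i == ord0 then phi1 else phi2.
have phi_psi i : Defs.implies vT vF (phi i) psi by rewrite /phi; case: ifP.
have /= := IE 2 phi psi phi_psi.
rewrite evenI2 oddI2 cards1 cards2 set1_ord0_neq_ord_max.
(* For n = 2 one has m = 2, so the weight on F vanishes. *)
match goal with |- pref ?L ?R -> _ =>
  suff [<- <-] : L = mix (/2) (pm psi) (pm (And phi1 phi2)) /\
                 R = mix (/2) (pm phi1) (pm phi2) by [] end.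
have two : (1 + 1 = 2)%R by lra.
split; apply: functional_extensionality => chi.
- by rewrite big_set1 conjI_setT2 /mix /phi /= two; lra.
- rewrite big_setU1 ?inE ?set1_ord0_neq_ord_max // big_set1 !conjI_set1.
  by rewrite /mix /phi /= two; lra.
Qed.

Lemma implies_Or_l chi phi : Defs.implies vT vF chi (Or chi phi).
Proof. by move=> v _ /(_ chi (or_introl erefl)) /= ->. Qed.

Lemma implies_Or_r chi phi : Defs.implies vT vF phi (Or chi phi).
Proof. by move=> v _ /(_ phi (or_introl erefl)) /= ->; rewrite orbT. Qed.

Lemma pref_pm_And chi phi :
  non_triviality vT vF pref -> objective_EU pref -> inclusion_exclusion vT vF pref ->
  pref (pm phi) (pm (Var vT)) -> pref (pm (And chi phi)) (pm chi).
Proof.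
move=> [top_max _] [_ [trans [_ indep]]] IE phi_top.
have half : (0 < /2 <= 1)%R by lra.
have mix_bet f g : is_bet (mix (/2) (pm f) (pm g)) by apply: is_bet_mix_pm; lra.
have phi_Or : pref (pm phi) (pm (Or chi phi)).
  exact: trans (is_bet_pm _) (is_bet_pm _) (is_bet_pm _) phi_top (proj1 (top_max _)).
have mix_phi_Or := proj1 (indep _ _ _ _ (is_bet_pm phi) (is_bet_pm (Or chi phi))
                                         (is_bet_pm (And chi phi)) half) phi_Or.
have IE2 := inclusion_exclusion2 IE (@implies_Or_l chi phi) (@implies_Or_r chi phi).
apply: (proj2 (indep _ _ _ _ (is_bet_pm _) (is_bet_pm _) (is_bet_pm phi) half)).
rewrite mix_half_comm.
exact: trans (mix_bet _ _) (mix_bet _ _) (mix_bet _ _) mix_phi_Or IE2.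
Qed.

Lemma S_implication_pref_top S phi :
  satisfies_S_implication vT vF pref S -> S phi -> pref (pm phi) (pm (Var vT)).
Proof. by move=> S_impl S_phi; apply: S_impl; apply: S_implies_premise. Qed.

Lemma S_implication_extend S phi :
  non_triviality vT vF pref -> objective_EU pref -> inclusion_exclusion vT vF pref ->
  satisfies_S_implication vT vF pref S -> pref (pm phi) (pm (Var vT)) ->
  satisfies_S_implication vT vF pref (S_implies vT vF S phi).
Proof.
move=> NT EU IE S_impl phi_top chi psi chi_psi.
have [_ [trans _]] := EU.
have psi_And := S_impl _ _ (S_implies_extend chi_psi).
exact: trans (is_bet_pm _) (is_bet_pm _) (is_bet_pm _) psi_And
  (pref_pm_And chi NT EU IE phi_top).
Qed.

End Preferences.

Theorem proposition6 (P : Type) (vT vF : P) (pref : bet P -> bet P -> Prop)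
  (Th S : form P -> Prop) :
  non_triviality vT vF pref ->
  objective_EU pref ->
  inclusion_exclusion vT vF pref ->
  theory vT vF Th ->
  theory vT vF S ->
  (forall phi, S phi -> Th phi) ->
  satisfies_S_implication vT vF pref S ->
  (forall S' : form P -> Prop,
     theory vT vF S' ->
     (forall phi, S phi -> S' phi) ->
     (exists phi, S' phi /\ ~ S phi) ->
     (forall phi, S' phi -> Th phi) ->
     ~ satisfies_S_implication vT vF pref S') ->
  forall phi, S phi <-> (Th phi /\ pref (pm phi) (pm (Var vT))).
Proof.
move=> NT EU IE Th_theory _ S_Th S_impl S_max phi; split.
  by move=> S_phi; split; [exact: S_Th | exact: S_implication_pref_top S_impl S_phi].
move=> [Th_phi phi_top]; apply: NNPP => S_phi_not.
apply: (S_max (S_implies vT vF S phi)).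
- exact: theory_S_implies Th_theory S_Th Th_phi.
- exact: S_implies_premise.
- by exists phi; split; first exact: S_implies_self.
- by move=> f; apply: S_implies_sub_theory Th_theory S_Th Th_phi.
- exact: S_implication_extend.
Qed.
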